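(* Let $G^*=(V_L,V_R,E^* )$ be drawn uniformly from $\mathcal{G}_{m,n,s,t}$ (assumed nonempty), and let $F$ be a viable set of edges. (1) Let $u\in V_L$ with $\deg_F(u)<t$, and let $v$ be uniformly sampled from $N_{G^*}(u)\setminus N_F(u)$. Then $$\Pr_{G^*,v}\left[\deg_F(v)>0\ \middle|\ F\subseteq E^*\right]\le\frac{|\{x\in V_R:\deg_F(x)>0\}|}{|V_R|}.$$ (2) Let $u\in V_R$ with $\deg_F(u)<s$, and let $v$ be uniformly sampled from $N_{G^*}(u)\setminus N_F(u)$. Then $$\Pr_{G^*,v}\left[\deg_F(v)>0\ \middle|\ F\subseteq E^*\right]\le\frac{|\{x\in V_L:\deg_F(x)>0\}|}{|V_L|}.$$
   Context: $\mathcal{G}_{m,n,s,t}$ is the set of bipartite graphs on fixed vertex sets $V_L$ ($|V_L|=n$, each of degree $t$) and $V_R$ ($|V_R|=m$, each of degree $s$). For a set of edges $F\subseteq\binom{V_L\cup V_R}{2}$ and a vertex $v$, $N_F(v)=\{u:\{v,u\}\in F\}$ and $\deg_F(v)=|N_F(v)|$. $F$ is viable if $F\subseteq E(G)$ for some $G\in\mathcal{G}_{m,n,s,t}$. *)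

From mathcomp Require Import all_boot all_order all_algebra.
Unset Printing Implicit Defensive.
Import Order.TTheory GRing.Theory Num.Theory.

(* V_L = 'I_n, V_R = 'I_m.  An edge {x,y} with x in V_L, y in V_R is the pair (x,y). *)
Definition edges (n m : nat) := {set 'I_n * 'I_m}.

Definition NL {n m} (F : edges n m) (x : 'I_n) : {set 'I_m} := [set y | (x, y) \in F].
Definition NR {n m} (F : edges n m) (y : 'I_m) : {set 'I_n} := [set x | (x, y) \in F].
Definition degL {n m} (F : edges n m) (x : 'I_n) : nat := #|NL F x|.
Definition degR {n m} (F : edges n m) (y : 'I_m) : nat := #|NR F y|.

Definition inGclass m n s t (G : edges n m) : bool :=
  [forall x, degL G x == t] && [forall y, degR G y == s].

Definition viable m n s t (F : edges n m) : Prop :=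
  exists G : edges n m, inGclass m n s t G && (F \subset G).

(* Pr_{G*,v}[deg_F(v) > 0 | F ⊆ E*] for u in V_L, G* uniform in G_{m,n,s,t},
   v uniform in N_{G*}(u) \ N_F(u). *)
Local Open Scope ring_scope.
Definition condprobL m n s t (F : edges n m) (u : 'I_n) : rat :=
  (\sum_(G : edges n m | inGclass m n s t G && (F \subset G))
     ((#|[set v in NL G u :\: NL F u | (0 < degR F v)%N]|%:R)%R
        / #|NL G u :\: NL F u|%:R))
  / #|[set G : edges n m | inGclass m n s t G && (F \subset G)]|%:R.

Definition condprobR m n s t (F : edges n m) (u : 'I_m) : rat :=
  (\sum_(G : edges n m | inGclass m n s t G && (F \subset G))
     ((#|[set v in NR G u :\: NR F u | (0 < degL F v)%N]|%:R)%R
        / #|NR G u :\: NR F u|%:R))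
  / #|[set G : edges n m | inGclass m n s t G && (F \subset G)]|%:R.

From mathcomp Require Import all_boot all_order all_algebra.
Import Order.TTheory GRing.Theory Num.Theory.

(* Fix u and, for y outside N_F(u), let f(y) count the completions G of F in the
   class with uy in G; the conditional probability is the share of the f(y) with
   deg_F(y) > 0 in the sum of all f(y).  If z has no F-edge then f(x) <= f(z): the
   2-switch ux, wz |-> uz, wx preserves all degrees, F and the common neighbourhood
   S of x and z, and for completions with common neighbourhood S, each one containing
   ux but not uz (resp. uz but not ux) admits exactly s - |S| vertices w to switch
   with, so double counting the switches compares the two families.  Hence f is
   smaller on vertices with an F-edge than on vertices without, so their share of
   the sum is at most their proportion in V_R.  The case u in V_R follows by transposing the graph. *)

Set Implicit Arguments.
Unset Strict Implicit.

Lemma sum_card_setI (T I : finType) (A : {set T}) (Q : T -> {set I}) (P : {set I}) :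
  \sum_(a in A) #|Q a :&: P| = \sum_(i in P) #|[set a in A | i \in Q a]|.
Proof.
transitivity (\sum_(a in A) \sum_(i in P) (i \in Q a : nat)).
  apply: eq_bigr => a _; rewrite -sum1_card big_mkcond [RHS]big_mkcond /=.
  by apply: eq_bigr => i _; rewrite inE; case: (i \in P); rewrite ?andbT ?andbF.
rewrite exchange_big; apply: eq_bigr => i _.
rewrite -sum1_card big_mkcond [RHS]big_mkcond /=.
by apply: eq_bigr => a _; rewrite inE; case: (a \in A).
Qed.

Lemma sum_card_regular (T I : finType) (A : {set T}) (Q : T -> {set I}) k :
  {in A, forall a, #|Q a| = k} -> #|A| * k = \sum_i #|[set a in A | i \in Q a]|.
Proof.
move=> Qk; rewrite -sum_nat_const (eq_bigr (fun a => #|Q a :&: [set: I]|)).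
  by rewrite sum_card_setI; apply: eq_bigl => i; rewrite inE.
by move=> a /Qk <-; rewrite setIT.
Qed.

Lemma leq_card_regular (T I : finType) (A B : {set T}) (QA QB : T -> {set I}) k :
  0 < k -> {in A, forall a, #|QA a| = k} -> {in B, forall b, #|QB b| = k} ->
  (forall i, #|[set a in A | i \in QA a]| <= #|[set b in B | i \in QB b]|) ->
  #|A| <= #|B|.
Proof.
move=> k_gt0 QAk QBk leAB; rewrite -(leq_pmul2r k_gt0).
by rewrite (sum_card_regular QAk) (sum_card_regular QBk) leq_sum.
Qed.

Lemma leq_card_fibers (T J : finType) (f : T -> J) (A B : {set T}) :
  (forall j, #|[set a in A | f a == j]| <= #|[set b in B | f b == j]|) ->
  #|A| <= #|B|.
Proof.
move=> leAB; rewrite -!sum1_card !(partition_big f xpredT) //=.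
by apply: leq_sum => j _; rewrite !sum1dep_card.
Qed.

Lemma leq_card_setD (T : finType) (A B : {set T}) :
  #|A :\: B| <= #|B :\: A| -> #|A| <= #|B|.
Proof. by rewrite -(cardsID B A) -(cardsID A B) setIC leq_add2l. Qed.

Lemma leq_sum_mean (T : finType) (P : {set T}) (f : T -> nat) :
  (forall x z, x \in P -> z \notin P -> f x <= f z) ->
  (\sum_(x in P) f x) * #|T| <= #|P| * \sum_x f x.
Proof.
move=> le_f; rewrite -(cardsC P) [X in _ <= _ * X](bigID (mem P)) /= !mulnDr.
rewrite [_ * #|P|]mulnC leq_add2l big_distrl /= -sum_nat_const.
apply: leq_sum => x Px; rewrite mulnC -sum_nat_const big_mkcond [X in _ <= X]big_mkcond.
by apply: leq_sum => z _; rewrite inE; case: ifP => // zP; apply: le_f.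
Qed.

Lemma card_swap (T : finType) (A : {set T}) x z :
  x \in A -> z \notin A -> #|[set y | (y \in A) (+) (y \in [set x; z])]| = #|A|.
Proof.
move=> xA zA; have -> : [set y | (y \in A) (+) (y \in [set x; z])] = z |: (A :\ x).
  apply/setP => y; rewrite !inE.
  by case: eqVneq => [->|_]; case: eqVneq => [->|_]; rewrite ?xA ?(negbTE zA) ?addbF.
by rewrite cardsU1 (cardsD1 x A) xA !inE negb_and zA orbT.
Qed.

Lemma ler_ratio_nat (R : numFieldType) (a b p q : nat) :
  0 < b -> 0 < q -> a * q <= p * b -> (a%:R / b%:R <= p%:R / q%:R :> R)%R.
Proof.
move=> b_gt0 q_gt0 le_aq.
by rewrite ler_pdivrMr ?ltr0n // mulrAC ler_pdivlMr ?ltr0n // -!natrM ler_nat.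
Qed.

Definition switch {n m} (U : {set 'I_n}) (X : {set 'I_m}) (G : edges n m) : edges n m :=
  [set e | (e \in G) (+) (e \in setX U X)].

Section Switch.

Variables (n m : nat).
Implicit Types (G F : edges n m) (U : {set 'I_n}) (X : {set 'I_m}).

Lemma switchK U X : involutive (switch U X).
Proof. by move=> G; apply/setP => e; rewrite !inE addbK. Qed.

Lemma NL_switch G U X a :
  NL (switch U X G) a = if a \in U then [set y | (y \in NL G a) (+) (y \in X)] else NL G a.
Proof. by apply/setP => y; case: ifP => aU; rewrite !inE aU ?addbF. Qed.

Lemma NR_switch G U X b :
  NR (switch U X G) b = if b \in X then [set y | (y \in NR G b) (+) (y \in U)] else NR G b.
Proof. by apply/setP => y; case: ifP => bX; rewrite !inE bX ?andbT ?andbF ?addbF. Qed.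

End Switch.

Section SwitchSquare.

Variables (n m : nat) (G : edges n m) (u w : 'I_n) (x z : 'I_m).
Hypotheses (Gux : (u, x) \in G) (Gwz : (w, z) \in G).
Hypotheses (Guz : (u, z) \notin G) (Gwx : (w, x) \notin G).

Local Notation G' := (switch [set u; w] [set x; z] G).

Lemma switch_square :
  [/\ (u, z) \in G', (w, x) \in G', (u, x) \notin G' & (w, z) \notin G'].
Proof. by rewrite !inE !eqxx ?orbT Gux Gwz (negbTE Guz) (negbTE Gwx). Qed.

Lemma degL_switch a : degL G' a = degL G a.
Proof.
rewrite /degL NL_switch in_set2; have [->|_] /= := eqVneq a u.
  by rewrite card_swap // inE.
have [->|_] //= := eqVneq a w.
by rewrite setUC card_swap // inE.
Qed.

Lemma degR_switch b : degR G' b = degR G b.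
Proof.
rewrite /degR NR_switch in_set2; have [->|_] /= := eqVneq b x.
  by rewrite card_swap // inE.
have [->|_] //= := eqVneq b z.
by rewrite setUC card_swap // inE.
Qed.

Lemma common_nbr_switch : NR G' x :&: NR G' z = NR G x :&: NR G z.
Proof.
apply/setP => a; rewrite !inE !eqxx !orbT !andbT.
have [->|_] /= := eqVneq a u; first by rewrite Gux (negbTE Guz).
have [->|_] /= := eqVneq a w; first by rewrite Gwz (negbTE Gwx) andbF.
by rewrite !addbF.
Qed.

Lemma inGclass_switch s t : inGclass m n s t G' = inGclass m n s t G.
Proof.
rewrite /inGclass; congr andb; apply: eq_forallb => v.
  by rewrite degL_switch.
by rewrite degR_switch.
Qed.

Lemma subset_switch (F : edges n m) :
  F \subset G -> (u, x) \notin F -> (w, z) \notin F -> F \subset G'.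
Proof.
move=> /subsetP FG Fux Fwz; apply/subsetP => -[a b] Fab; rewrite inE FG //=.
move: Fab; apply: contraL => /setXP[/set2P[]-> /set2P[]->] //.
  exact: contra (FG _) Guz.
exact: contra (FG _) Gwx.
Qed.

End SwitchSquare.

Definition completions m n s t (F : edges n m) : {set edges n m} :=
  [set G | inGclass m n s t G && (F \subset G)].

Lemma degL_inGclass m n s t (G : edges n m) a : inGclass m n s t G -> degL G a = t.
Proof. by case/andP=> /forallP/(_ a)/eqP. Qed.

Lemma degR_inGclass m n s t (G : edges n m) b : inGclass m n s t G -> degR G b = s.
Proof. by case/andP=> _ /forallP/(_ b)/eqP. Qed.

Section EdgeCount.

Variables (m n s t : nat) (F : edges n m) (u : 'I_n) (x z : 'I_m).
Hypotheses (Fux : (u, x) \notin F) (Fz : forall a, (a, z) \notin F).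

Local Notation C := (completions s t F).

Lemma leq_card_switch_stratum (S : {set 'I_n}) :
  #|[set G in [set G in C | ((u, x) \in G) && ((u, z) \notin G)]
         | NR G x :&: NR G z == S]|
  <= #|[set G in [set G in C | ((u, z) \in G) && ((u, x) \notin G)]
            | NR G x :&: NR G z == S]|.
Proof.
set A := [set G in _ | _]; set B := [set G in _ | _].
have card_diff y y' G : inGclass m n s t G -> NR G y :&: NR G y' = S ->
    #|NR G y :\: NR G y'| = s - #|S|.
  by move=> /degR_inGclass dR <-; rewrite cardsD -[#|NR G y|]/(degR G y) dR.
have [->|[G0]] := set_0Vmem A; first by rewrite cards0.
rewrite !inE => /andP[/andP[/andP[G0S _] /andP[G0ux G0uz]] /eqP G0S'].
apply: (@leq_card_regular _ _ A B (fun G => NR G z :\: NR G x)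
                                  (fun G => NR G x :\: NR G z) (s - #|S|)).
- rewrite -(card_diff x z G0) //.
  by apply/card_gt0P; exists u; rewrite !inE G0ux G0uz.
- move=> G; rewrite !inE => /andP[/andP[/andP[GS _] _] /eqP GS'].
  by rewrite card_diff // setIC.
- by move=> G; rewrite !inE => /andP[/andP[/andP[GS _] _] /eqP GS']; rewrite card_diff.
move=> w; rewrite -(card_imset _ (inv_inj (switchK [set u; w] [set x; z]))).
apply/subset_leq_card/subsetP => _ /imsetP[G + ->].
rewrite !inE => /andP[/andP[/andP[/andP[GS FG] /andP[Gux Guz]] GS'] /andP[Gwx Gwz]].
have := switch_square Gux Gwz Guz Gwx; rewrite !inE => -[-> -> /negbTE-> /negbTE->].
by rewrite inGclass_switch // GS subset_switch ?Fz // common_nbr_switch // GS'.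
Qed.

Lemma leq_card_switch :
  #|[set G in C | ((u, x) \in G) && ((u, z) \notin G)]|
  <= #|[set G in C | ((u, z) \in G) && ((u, x) \notin G)]|.
Proof. exact: leq_card_fibers leq_card_switch_stratum. Qed.

Lemma leq_card_edge : #|[set G in C | (u, x) \in G]| <= #|[set G in C | (u, z) \in G]|.
Proof.
apply: leq_card_setD.
have setD_edge y y' : [set G in C | (u, y) \in G] :\: [set G in C | (u, y') \in G]
                      = [set G in C | ((u, y) \in G) && ((u, y') \notin G)].
  by apply/setP => G; rewrite !inE; case: (inGclass _ _ _ _ G && _) => //=; rewrite andbC.
by rewrite !setD_edge leq_card_switch.
Qed.

End EdgeCount.

Definition transpose {n m} (G : edges n m) : edges m n := [set e | (e.2, e.1) \in G].

Section Transpose.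

Variables (n m : nat).
Implicit Types (F G : edges n m).

Lemma transposeK : cancel (@transpose n m) transpose.
Proof. by move=> G; apply/setP => -[a b]; rewrite !inE. Qed.

Lemma NL_transpose G y : NL (transpose G) y = NR G y.
Proof. by apply/setP => a; rewrite !inE. Qed.

Lemma NR_transpose G x : NR (transpose G) x = NL G x.
Proof. by apply/setP => b; rewrite !inE. Qed.

Lemma degL_transpose G y : degL (transpose G) y = degR G y.
Proof. by rewrite /degL NL_transpose. Qed.

Lemma degR_transpose G x : degR (transpose G) x = degL G x.
Proof. by rewrite /degR NR_transpose. Qed.

Lemma inGclass_transpose s t G : inGclass n m t s (transpose G) = inGclass m n s t G.
Proof.
rewrite /inGclass andbC; congr andb; apply: eq_forallb => v.
  by rewrite degR_transpose.
by rewrite degL_transpose.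
Qed.

Lemma subset_transpose F G : (transpose F \subset transpose G) = (F \subset G).
Proof.
apply/subsetP/subsetP => FG [a b]; last by rewrite !inE => /FG.
by have := FG (b, a); rewrite !inE.
Qed.

End Transpose.

Local Open Scope ring_scope.

Lemma condprobL_le m n s t (F : edges n m) (u : 'I_n) :
  (degL F u < t)%N ->
  condprobL m n s t F u <= #|[set y : 'I_m | (0 < degR F y)%N]|%:R / #|'I_m|%:R.
Proof.
move=> lt_Fu_t; set P := [set y | _]; set K := (t - degL F u)%N.
rewrite /condprobL -/(completions s t F); set C := completions s t F.
pose D G := NL G u :\: NL F u.
pose f y := #|[set G in C | y \in D G]|.
have DK : {in C, forall G, #|D G| = K}.
  move=> G; rewrite inE => /andP[GS FG].
  have FGu : NL F u \subset NL G u by apply/subsetP => y; rewrite !inE; apply: (subsetP FG).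
  by rewrite cardsD (setIidPr FGu) -[#|NL G u|]/(degL G u) (degL_inGclass _ GS).
have f_edge y : (u, y) \notin F -> f y = #|[set G in C | (u, y) \in G]|.
  by move=> Fuy; apply: eq_card => G; rewrite !inE (negbTE Fuy).
have f_le y y' : y \in P -> y' \notin P -> (f y <= f y')%N.
  move=> _ Py'; have Fy' a : (a, y') \notin F.
    by apply: contra Py' => Fay'; rewrite inE; apply/card_gt0P; exists a; rewrite inE.
  have [Fuy|Fuy] := boolP ((u, y) \in F); last by rewrite !f_edge ?leq_card_edge.
  rewrite /f (_ : [set G in C | y \in D G] = set0) ?cards0 //.
  by apply/setP => G; rewrite !inE Fuy andbF.
have [C0|C_gt0] := posnP #|C|; first by rewrite C0 invr0 mulr0 divr_ge0.
have m_gt0 : (0 < #|'I_m|)%N.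
  case/card_gt0P: C_gt0 => G /DK DG_K.
  have /card_gt0P[y _] : (0 < #|D G|)%N by rewrite DG_K subn_gt0.
  by apply/card_gt0P; exists y.
rewrite (eq_bigr (fun G => #|D G :&: P|%:R / K%:R)); last first.
  by move=> G CG; rewrite setIdE DK // inE.
rewrite -mulr_suml -natr_sum (eq_bigl (mem C)); last by move=> G /=; rewrite inE.
rewrite sum_card_setI -mulrA -invfM -natrM ler_ratio_nat ?muln_gt0 ?subn_gt0 ?lt_Fu_t //.
by rewrite [(K * _)%N]mulnC (sum_card_regular DK) (leq_sum_mean f_le).
Qed.

Lemma condprobR_transpose m n s t (F : edges n m) u :
  condprobR m n s t F u = condprobL n m t s (transpose F) u.
Proof.
have tr_bij := Bijective (@transposeK m n) (@transposeK n m).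
rewrite /condprobL /condprobR (reindex transpose (onW_bij _ tr_bij)) /=.
have in_completions_transpose (G : edges m n) :
    inGclass m n s t (transpose G) && (F \subset transpose G)
    = inGclass n m t s G && (transpose F \subset G).
  by rewrite -inGclass_transpose -subset_transpose !transposeK.
congr (_ / _%:R).
  apply: eq_big => [G|G _]; first exact: in_completions_transpose.
  by rewrite NR_transpose -NL_transpose; under eq_finset do rewrite -degR_transpose.
rewrite -!sum1_card (reindex transpose (onW_bij _ tr_bij)) /=.
by apply: eq_bigl => G; rewrite !inE in_completions_transpose.
Qed.

Theorem lemma4p4 (m n s t : nat) (F : edges n m) :
  (exists G : edges n m, inGclass m n s t G) ->
  viable m n s t F ->
  (forall u : 'I_n, (degL F u < t)%N ->
     condprobL m n s t F u
       <= #|[set x : 'I_m | (0 < degR F x)%N]|%:R / #|'I_m|%:R) /\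
  (forall u : 'I_m, (degR F u < s)%N ->
     condprobR m n s t F u
       <= #|[set x : 'I_n | (0 < degL F x)%N]|%:R / #|'I_n|%:R).
Proof.
move=> _ _; split=> u lt_Fu; first exact: condprobL_le.
rewrite condprobR_transpose; under eq_finset do rewrite -degR_transpose.
by apply: condprobL_le; rewrite degL_transpose.
Qed.
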